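(* Let $E$ be a vector lattice, and suppose that $F$ is an order dense ideal in $E$ admitting an o-Lebesgue topology $\tau_F$. Then $\mathrm{u}_F\tau_F$ is a uo-Lebesgue topology on $E$. Suppose that at least one of the following holds: (a) $E$ has the countable sup property; (b) $\tau_F$ is metrisable and $F$ has a countable order basis (which is always the case when $\tau_F$ is a metrisable uo-Lebesgue topology). Then $C_{\mathrm{u}_F\tau_F}=E$. Consequently: (1) every $\mathrm{u}_F\tau_F$-convergent net in $E$ has an embedded sequence that is uo-convergent as well as $\mathrm{u}_F\tau_F$-convergent to the same limit; (2) a sequence in $E$ is $\mathrm{u}_F\tau_F$-convergent to $x\in E$ if and only if every subsequence has a further subsequence that is uo-convergent to $x$.
   Context: All vector lattices are real and Archimedean; linear topologies are Hausdorff. A locally solid topology on a vector lattice is a linear topology such that zero has a neighbourhood basis of solid sets. Order convergence: $x_\alpha\to x$ in order if there is a net $y_\beta\downarrow0$ such that for each $\beta_0$ eventually $|x_\alpha-x|\leq y_{\beta_0}$; uo-convergence: $|x_\alpha-x|\wedge|y|\to0$ in order for all $y\in E$. o-Lebesgue (resp. uo-Lebesgue) topology: a locally solid topology in which order (resp. uo-) convergent nets converge topologically to the same limit. $F$ is order dense in $E$ if for every $x>0$ in $E$ there is $y\in F$ with $0<y\leq x$. For a locally solid topology $\tau_F$ on $F$, the unbounded topology $\mathrm{u}_F\tau_F$ on $E$ is the locally solid topology with neighbourhood basis at zero the sets $U_{V,y}=\{x\in E: |x|\wedge|y|\in V\}$, with $V$ ranging over a basis of solid $\tau_F$-neighbourhoods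 of zero in $F$ and $y$ over $F$. A sequence $(V_n)$ of neighbourhoods of zero is normal if $V_{n+1}+V_{n+1}\subseteq V_n$; the carrier $C_\tau$ of a locally solid topology $\tau$ on $E$ is the union of the disjoint complements $N^{\mathrm d}$ where $N=\bigcap_nV_n$ ranges over intersections of normal sequences of solid $\tau$-neighbourhoods of zero. An order basis of a vector lattice $G$ is a non-empty $A\subseteq G$ with $A^{\mathrm d}=\{0\}$. Countable sup property: every subset with a supremum contains an at most countable subset with the same supremum. Embedded sequence: given a net $(x_\alpha)_{\alpha\in A}$, a sequence $(x_{\alpha_n})$ with $\alpha_1\leq\alpha_2\leq\dotsb$, strictly increasing when $A$ has no largest element. *)

From HB Require Import structures.
From mathcomp Require Import all_boot all_order all_algebra.
From mathcomp Require Import boolp classical_sets cardinality reals.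
Set Implicit Arguments. Unset Strict Implicit. Unset Printing Implicit Defensive.
Import Order.TTheory GRing.Theory Num.Theory.
Local Open Scope classical_set_scope.
Local Open Scope ring_scope.

Definition VL_axioms (R : realType) (V : lmodType R)
    (le : V -> V -> Prop) (join : V -> V -> V) : Prop :=
  (forall x, le x x) /\
  (forall x y, le x y -> le y x -> x = y) /\
  (forall x y z, le x y -> le y z -> le x z) /\
  (forall x y z, le x y -> le (x + z) (y + z)) /\
  (forall (a : R) x y, 0 <= a -> le x y -> le (a *: x) (a *: y)) /\
  (forall x y, [/\ le x (join x y), le y (join x y) &
                   forall z, le x z -> le y z -> le (join x y) z]) /\
  (forall x y, le 0 x -> (forall n : nat, le (x *+ n) y) -> x = 0).

Record VL (R : realType) := MkVL {
  vl_car :> lmodType R;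
  vl_le : vl_car -> vl_car -> Prop;
  vl_join : vl_car -> vl_car -> vl_car;
  vl_ax : VL_axioms vl_le vl_join }.

Section VLdefs.
Variables (R : realType) (E : VL R).
Local Notation le := (@vl_le R E).
Local Notation join := (@vl_join R E).

Definition vl_meet (x y : E) : E := - join (- x) (- y).
Definition vl_abs (x : E) : E := join x (- x).
Local Notation meet := vl_meet.
Local Notation abs := vl_abs.

Definition disj (x y : E) : Prop := meet (abs x) (abs y) = 0.
Definition dcompl_in (S D : set E) : set E :=
  [set x | S x /\ forall y, D y -> disj x y].

Definition is_ideal (F : set E) : Prop :=
  [/\ F 0, (forall x y, F x -> F y -> F (x + y)),
      (forall (a : R) x, F x -> F (a *: x)) &
      (forall x y, F y -> le (abs x) (abs y) -> F x)].

Definition order_dense (F : set E) : Prop :=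
  forall x : E, le 0 x -> x <> 0 ->
    exists y, [/\ F y, le 0 y, y <> 0 & le y x].

Definition is_sup_of (D : set E) (s : E) : Prop :=
  (forall d, D d -> le d s) /\ (forall z, (forall d, D d -> le d z) -> le s z).

Definition countable_sup_property : Prop :=
  forall (D : set E) (s : E), is_sup_of D s ->
    exists D' : set E, [/\ D' `<=` D, countable D' & is_sup_of D' s].

Definition is_order_basis_in (S A : set E) : Prop :=
  [/\ A `<=` S, A !=set0 & forall x, dcompl_in S A x -> x = 0].

Definition has_countable_order_basis_in (S : set E) : Prop :=
  exists A : set E, is_order_basis_in S A /\ countable A.

Definition directed (A : Type) (leA : A -> A -> Prop) : Prop :=
  [/\ (exists a : A, True), (forall a, leA a a),
      (forall a b c, leA a b -> leA b c -> leA a c) &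
      (forall a b, exists c, leA a c /\ leA b c)].

Definition eventually (A : Type) (leA : A -> A -> Prop) (P : A -> Prop) : Prop :=
  exists a0, forall a, leA a0 a -> P a.

(* order convergence of the net x (indexed by (A,leA)) to l, computed in the
   sublattice S: the dominating net y_b decreases to 0 in S *)
Definition oconv_in (S : set E) (A : Type) (leA : A -> A -> Prop)
    (x : A -> E) (l : E) : Prop :=
  exists (B : Type) (leB : B -> B -> Prop) (y : B -> E),
    directed leB /\ (forall b, S (y b)) /\
    (forall b1 b2, leB b1 b2 -> le (y b2) (y b1)) /\
    (forall b, le 0 (y b)) /\
    (forall z, S z -> (forall b, le z (y b)) -> le z 0) /\
    (forall b0, eventually leA (fun a => le (abs (x a - l)) (y b0))).

Definition uoconv_in (S : set E) (A : Type) (leA : A -> A -> Prop)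
    (x : A -> E) (l : E) : Prop :=
  forall y, S y -> oconv_in S leA (fun a => meet (abs (x a - l)) (abs y)) 0.

(* Locally solid topologies on a sublattice S, given by their filter N of    *)
(* neighbourhoods of zero (subsets of S).                                    *)

Definition solid_in (S U : set E) : Prop :=
  U `<=` S /\ forall x y, S x -> U y -> le (abs x) (abs y) -> U x.

Definition is_loc_solid_top (S : set E) (N : set (set E)) : Prop :=
  (exists U, N U) /\
  (forall U, N U -> U `<=` S) /\
  (forall U V, N U -> U `<=` V -> V `<=` S -> N V) /\
  (forall U V, N U -> N V -> N (U `&` V)) /\
  (forall U, N U -> forall x, S x ->
     exists e : R, 0 < e /\ forall t : R, `|t| <= e -> U (t *: x)) /\
  (forall U, N U -> exists V, [/\ N V, V `<=` U &
     forall x (t : R), V x -> `|t| <= 1 -> V (t *: x)]) /\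
  (forall U, N U -> exists V, N V /\ forall x y, V x -> V y -> U (x + y)) /\
  (forall U, N U -> exists V, [/\ N V, solid_in S V & V `<=` U]) /\
  (forall x, S x -> (forall U, N U -> U x) -> x = 0).

Definition tconv (N : set (set E)) (A : Type) (leA : A -> A -> Prop)
    (x : A -> E) (l : E) : Prop :=
  forall U, N U -> eventually leA (fun a => U (x a - l)).

Definition o_Lebesgue_in (S : set E) (N : set (set E)) : Prop :=
  is_loc_solid_top S N /\
  forall (A : Type) (leA : A -> A -> Prop) (x : A -> E) (l : E),
    directed leA -> (forall a, S (x a)) -> S l ->
    oconv_in S leA x l -> tconv N leA x l.

Definition uo_Lebesgue_in (S : set E) (N : set (set E)) : Prop :=
  is_loc_solid_top S N /\
  forall (A : Type) (leA : A -> A -> Prop) (x : A -> E) (l : E),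
    directed leA -> (forall a, S (x a)) -> S l ->
    uoconv_in S leA x l -> tconv N leA x l.

Definition top_open_in (S : set E) (N : set (set E)) (O : set E) : Prop :=
  O `<=` S /\ forall x, O x -> exists U, N U /\ [set x + u | u in U] `<=` O.

Definition metrisable_in (S : set E) (N : set (set E)) : Prop :=
  exists d : E -> E -> R,
    [/\ (forall x y, S x -> S y -> 0 <= d x y),
        (forall x y, S x -> S y -> (d x y = 0 <-> x = y)),
        (forall x y, S x -> S y -> d x y = d y x),
        (forall x y z, S x -> S y -> S z -> d x z <= d x y + d y z) &
        (forall O, O `<=` S ->
           (top_open_in S N O <->
            forall x, O x -> exists r : R, 0 < r /\
              [set y | S y /\ d x y < r] `<=` O))].

Definition uF (F : set E) (NF : set (set E)) : set (set E) :=
  fun W => exists (V : set E) (y : E),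
    [/\ NF V, solid_in F V, F y & [set x | V (meet (abs x) (abs y))] `<=` W].

Definition normal_seq (V : nat -> set E) : Prop :=
  forall n x y, V n.+1 x -> V n.+1 y -> V n (x + y).

Definition carrier (N : set (set E)) : set E :=
  [set x | exists V : nat -> set E,
     [/\ (forall n, N (V n)), (forall n, solid_in setT (V n)), normal_seq V &
         dcompl_in setT (\bigcap_n V n) x]].

Definition embedded_seq (A : Type) (leA : A -> A -> Prop) (al : nat -> A) : Prop :=
  (forall n, leA (al n) (al n.+1)) /\
  (~ (exists top, forall a, leA a top) -> forall n, ~ leA (al n.+1) (al n)).

End VLdefs.

Definition nat_le (m n : nat) : Prop := (m <= n)%N.
Definition strict_incr (p : nat -> nat) : Prop := forall n, (p n < p n.+1)%N.

From HB Require Import structures.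
From mathcomp Require Import all_boot all_order all_algebra.
From mathcomp Require Import boolp classical_sets functions cardinality reals.
From mathcomp.algebra_tactics Require Import lra.
Import Order.TTheory GRing.Theory Num.Theory.
Set Implicit Arguments. Unset Strict Implicit. Unset Printing Implicit Defensive.
Local Open Scope classical_set_scope.
Local Open Scope ring_scope.

(* Since F is an ideal, uo-convergence in E makes [|x_a - x| /\ |y|] order convergent in
   F for [y] in F, so the o-Lebesgue property of tau_F turns the solid neighbourhoods
   [{x | |x| /\ |y| in V}] of u_F tau_F into a uo-Lebesgue topology.
   The o-Lebesgue property also makes the carrier of tau_F order dense in F: if no
   [0 < t <= w] were disjoint from the kernel [\bigcap_n V_n] of a normal sequence,
   [w] would be the supremum, hence the tau_F-limit, of the kernel elements below it.
   Hence [|x|] is the supremum of carrier elements; under (a), or under (b) where the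
   kernel is [{0}], countably many of them [v_i] suffice, and one normal sequence
   [V_n] serving all of them yields the normal sequence [{x | |x| /\ (v_0 + .. + v_n)
   in V_n}] of u_F tau_F whose kernel is disjoint from [x].
   When the carrier of a uo-Lebesgue topology is E, the indices of a convergent net
   are chosen diagonally, the n-th term lying in the n-th set of the normal sequences
   of all previous terms; the infimum of the tail suprema of the resulting sequence
   lies in all these sets, so it is disjoint from every term, hence zero.
   For the remark in (b), a maximal disjoint system in F has only finitely many
   members outside each neighbourhood, as disjoint sequences are uo-null. *)

Lemma countable_enum (T : Type) (A : set T) (a0 : T) : countable A ->
  exists v : nat -> T, (forall i, A (v i) \/ v i = a0) /\ A `<=` range v.
Proof.
move=> /pfcard_geP[->|[f]]; first by exists (fun=> a0); split=> [i|//]; right.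
exists f; split=> [i|a /(@surj _ _ _ _ f)[i _ <-]]; last by exists i.
by left; apply: funS.
Qed.

Lemma infinite_set_injective (T : Type) (A : set T) : infinite_set A ->
  exists f : nat -> T, (forall n, A (f n)) /\ injective f.
Proof.
move=> /infiniteP /card_leP -[f].
exists (fun n => val (f (to_setT n))); split=> [n|m n /val_inj /(@inj _ _ _ f)].
  by have := set_valP (f (to_setT n)).
by move=> /(_ (in_setT _) (in_setT _)) /(congr1 val).
Qed.

Lemma nat_le_directed : directed nat_le.
Proof.
rewrite /nat_le; split=> [|//|m n p|m n]; [by exists 0%N|exact: leq_trans|].
by exists (maxn m n); rewrite leq_maxl leq_maxr.
Qed.

Lemma strict_incr_ge (p : nat -> nat) : strict_incr p -> forall n, (n <= p n)%N.
Proof. by move=> hp; elim=> [|n ih] //; apply: leq_ltn_trans ih (hp n). Qed.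

Section VectorLattice.
Variables (R : realType) (E : VL R).
Local Notation le := (@vl_le R E).
Local Notation join := (@vl_join R E).
Local Notation meet := (@vl_meet R E).
Local Notation abs := (@vl_abs R E).

Lemma vl_lexx (x : E) : le x x.
Proof. by have [h _] := vl_ax E; apply: h. Qed.
Lemma vl_le_anti (x y : E) : le x y -> le y x -> x = y.
Proof. by have [_ [h _]] := vl_ax E; apply: h. Qed.
Lemma vl_le_trans (y x z : E) : le x y -> le y z -> le x z.
Proof. by have [_ [_ [h _]]] := vl_ax E; apply: h. Qed.
Lemma vl_lerD2r (z x y : E) : le x y -> le (x + z) (y + z).
Proof. by have [_ [_ [_ [h _]]]] := vl_ax E; apply: h. Qed.
Lemma vl_ler_wpZ2l (a : R) (x y : E) : 0 <= a -> le x y -> le (a *: x) (a *: y).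
Proof. by have [_ [_ [_ [_ [h _]]]]] := vl_ax E; apply: h. Qed.
Lemma vl_joinP (x y : E) : [/\ le x (join x y), le y (join x y) &
  forall z, le x z -> le y z -> le (join x y) z].
Proof. by have [_ [_ [_ [_ [_ [h _]]]]]] := vl_ax E; apply: h. Qed.
Lemma vl_archimedean (x y : E) : le 0 x -> (forall n, le (x *+ n) y) -> x = 0.
Proof. by have [_ [_ [_ [_ [_ [_ h]]]]]] := vl_ax E; apply: h. Qed.

Lemma vl_lerD2l (z x y : E) : le x y -> le (z + x) (z + y).
Proof. by rewrite ![z + _]addrC; apply: vl_lerD2r. Qed.
Lemma vl_lerD (a b c d : E) : le a b -> le c d -> le (a + c) (b + d).
Proof. by move=> h1 h2; apply: vl_le_trans (vl_lerD2r c h1) (vl_lerD2l b h2). Qed.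
Lemma vl_subr_ge0 (x y : E) : le 0 (y - x) <-> le x y.
Proof.
split=> [h|h]; first by have := vl_lerD2r x h; rewrite add0r subrK.
by have := vl_lerD2r (- x) h; rewrite subrr.
Qed.
Lemma vl_lerN2 (x y : E) : le x y -> le (- y) (- x).
Proof.
by move=> /(vl_lerD2r (- x - y)); rewrite addNKr [- x - y]addrC addNKr.
Qed.
Lemma vl_lerN2P (x y : E) : le (- y) (- x) -> le x y.
Proof. by move=> /vl_lerN2; rewrite !opprK. Qed.
Lemma vl_gerBl (x y : E) : le 0 y -> le (x - y) x.
Proof. by move=> /vl_lerN2 /(vl_lerD2l x); rewrite oppr0 addr0. Qed.
Lemma vl_lerDl (x y : E) : le 0 y -> le x (x + y).
Proof. by move=> /(vl_lerD2l x); rewrite addr0. Qed.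
Lemma vl_ler_subC (x y z : E) : le x (z - y) -> le y (z - x).
Proof. by move=> /(vl_lerD2r (y - x)); rewrite [x + _]addrC subrK addrA subrK. Qed.
Lemma vl_lerBrDr (x y z : E) : le (x + y) z -> le x (z - y).
Proof. by move=> /(vl_lerD2r (- y)); rewrite addrK. Qed.
Lemma vl_addr_ge0 (x y : E) : le 0 x -> le 0 y -> le 0 (x + y).
Proof. by move=> h1 h2; rewrite -[0]addr0; apply: vl_lerD. Qed.

Lemma vl_leUl (x y : E) : le x (join x y). Proof. by case: (vl_joinP x y). Qed.
Lemma vl_leUr (x y : E) : le y (join x y). Proof. by case: (vl_joinP x y). Qed.
Lemma vl_leUx (x y z : E) : le x z -> le y z -> le (join x y) z.
Proof. by case: (vl_joinP x y) => _ _; apply. Qed.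
Lemma vl_joinC (x y : E) : join x y = join y x.
Proof.
by apply: vl_le_anti; apply: vl_leUx;
  [apply: vl_leUr|apply: vl_leUl|apply: vl_leUr|apply: vl_leUl].
Qed.
Lemma vl_leU2 (x y x' y' : E) : le x x' -> le y y' -> le (join x y) (join x' y').
Proof.
move=> h1 h2; apply: vl_leUx.
- exact: vl_le_trans h1 (vl_leUl _ _).
- exact: vl_le_trans h2 (vl_leUr _ _).
Qed.
Lemma vl_join_l (x y : E) : le y x -> join x y = x.
Proof.
by move=> h; apply: vl_le_anti; [apply: vl_leUx => //; apply: vl_lexx|apply: vl_leUl].
Qed.

Lemma vl_leIl (x y : E) : le (meet x y) x.
Proof. by apply: vl_lerN2P; rewrite opprK; apply: vl_leUl. Qed.
Lemma vl_leIr (x y : E) : le (meet x y) y.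
Proof. by apply: vl_lerN2P; rewrite opprK; apply: vl_leUr. Qed.
Lemma vl_lexI (x y z : E) : le z x -> le z y -> le z (meet x y).
Proof.
by move=> h1 h2; apply: vl_lerN2P; rewrite opprK; apply: vl_leUx; apply: vl_lerN2.
Qed.
Lemma vl_meetC (x y : E) : meet x y = meet y x.
Proof. by rewrite /vl_meet vl_joinC. Qed.
Lemma vl_leI2 (x y x' y' : E) : le x x' -> le y y' -> le (meet x y) (meet x' y').
Proof.
move=> h1 h2; apply: vl_lexI.
- exact: vl_le_trans (vl_leIl _ _) h1.
- exact: vl_le_trans (vl_leIr _ _) h2.
Qed.
Lemma vl_meet_l (x y : E) : le x y -> meet x y = x.
Proof.
by move=> h; apply: vl_le_anti; [apply: vl_leIl|apply: vl_lexI => //; apply: vl_lexx].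
Qed.
Lemma vl_meet_ge0 (a b : E) : le 0 a -> le 0 b -> le 0 (meet a b).
Proof. exact: vl_lexI. Qed.
Lemma vl_meet0l (a : E) : le 0 a -> meet 0 a = 0.
Proof. exact: vl_meet_l. Qed.

Lemma vl_addrU (x y z : E) : x + join y z = join (x + y) (x + z).
Proof.
apply: vl_le_anti; last first.
  by apply: vl_leUx; apply: vl_lerD2l; [apply: vl_leUl|apply: vl_leUr].
have hy : le y (join (x + y) (x + z) - x).
  by have := vl_lerD2r (- x) (vl_leUl (x + y) (x + z)); rewrite addrAC subrr add0r.
have hz : le z (join (x + y) (x + z) - x).
  by have := vl_lerD2r (- x) (vl_leUr (x + y) (x + z)); rewrite addrAC subrr add0r.
by have := vl_lerD2l x (vl_leUx hy hz); rewrite [x + (_ - _)]addrC subrK.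
Qed.
Lemma vl_addrI (x y z : E) : x + meet y z = meet (x + y) (x + z).
Proof. by rewrite /vl_meet -[x]opprK -opprD vl_addrU !opprD !opprK. Qed.
Lemma vl_addUI (x y : E) : join x y + meet x y = x + y.
Proof.
have h : x + y + join (- x) (- y) = join y x.
  by rewrite vl_addrU addrK [x + y]addrC addrK.
have -> : meet x y = x + y - join y x by rewrite -h opprD addrA subrr add0r.
by rewrite vl_joinC addrC subrK.
Qed.
Lemma vl_meet0_join (a b : E) : meet a b = 0 -> join a b = a + b.
Proof. by move=> h; rewrite -vl_addUI h addr0. Qed.
Lemma vl_subr_meet (z s : E) : z - meet z s = join 0 (z - s).
Proof. by rewrite /vl_meet opprK vl_addrU subrr. Qed.
Lemma vl_meetDl_le (a b c : E) : le 0 a -> le 0 b -> le 0 c ->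
  le (meet (a + b) c) (meet a c + meet b c).
Proof.
move=> ha hb hc; rewrite vl_addrI; apply: vl_lexI.
- rewrite [meet a c + b]addrC vl_addrI [b + a]addrC [b + c]addrC.
  by apply: vl_leI2; [apply: vl_lexx|apply: vl_lerDl].
- apply: vl_le_trans (vl_leIr _ _) _; rewrite [_ + c]addrC.
  exact/vl_lerDl/vl_meet_ge0.
Qed.

Lemma vl_ler_abs (x : E) : le x (abs x). Proof. exact: vl_leUl. Qed.
Lemma vl_lerN_abs (x : E) : le (- x) (abs x). Proof. exact: vl_leUr. Qed.
Lemma vl_abs_le (x b : E) : le x b -> le (- x) b -> le (abs x) b.
Proof. exact: vl_leUx. Qed.
Lemma vl_absN (x : E) : abs (- x) = abs x.
Proof. by rewrite /vl_abs opprK vl_joinC. Qed.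
Lemma vl_abs_subC (x y : E) : abs (x - y) = abs (y - x).
Proof. by rewrite -vl_absN opprB. Qed.

Lemma vl_abs_ge0 (x : E) : le 0 (abs x).
Proof.
have h : le 0 (abs x + abs x).
  by rewrite -(subrr x); apply: vl_lerD; [apply: vl_ler_abs|apply: vl_lerN_abs].
have h2 : 0 <= 2^-1 :> R by rewrite invr_ge0.
have := vl_ler_wpZ2l h2 h; rewrite scaler0 -mulr2n -scaler_nat scalerA.
by rewrite mulVf ?pnatr_eq0 // scale1r.
Qed.
Lemma vl_ger0_abs (x : E) : le 0 x -> abs x = x.
Proof.
move=> h; apply: vl_join_l; apply: (@vl_le_trans 0) => //.
by have := vl_lerN2 h; rewrite oppr0.
Qed.
Lemma vl_abs0 : abs 0 = 0 :> E. Proof. exact/vl_ger0_abs/vl_lexx. Qed.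
Lemma vl_abs_id (x : E) : abs (abs x) = abs x. Proof. exact/vl_ger0_abs/vl_abs_ge0. Qed.
Lemma vl_abs_eq0 (x : E) : abs x = 0 -> x = 0.
Proof.
move=> h; apply: vl_le_anti; first by rewrite -h; apply: vl_ler_abs.
by apply: vl_lerN2P; rewrite oppr0 -h; apply: vl_lerN_abs.
Qed.
Lemma vl_ler_absD (x y : E) : le (abs (x + y)) (abs x + abs y).
Proof.
apply: vl_abs_le; first by apply: vl_lerD; apply: vl_ler_abs.
by rewrite opprD; apply: vl_lerD; apply: vl_lerN_abs.
Qed.

Lemma vl_scalerU (a : R) (x y : E) : 0 <= a -> a *: join x y = join (a *: x) (a *: y).
Proof.
rewrite le0r => /orP[/eqP->|ha]; first by rewrite !scale0r vl_join_l //; apply: vl_lexx.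
have ha' : 0 <= a by apply: ltW.
apply: vl_le_anti; last first.
  by apply: vl_leUx; apply: vl_ler_wpZ2l => //; [apply: vl_leUl|apply: vl_leUr].
have hi : 0 <= a^-1 by rewrite invr_ge0.
have hK z : a^-1 *: (a *: z) = z by rewrite scalerA mulVf ?gt_eqF // scale1r.
suff h : le (join x y) (a^-1 *: join (a *: x) (a *: y)).
  by have := vl_ler_wpZ2l ha' h; rewrite scalerA divff ?gt_eqF // scale1r.
apply: vl_leUx; rewrite -[X in le X _]hK; apply: vl_ler_wpZ2l => //.
- exact: vl_leUl.
- exact: vl_leUr.
Qed.
Lemma vl_absZ (a : R) (x : E) : abs (a *: x) = `|a| *: abs x.
Proof.
have hp b z : 0 <= b -> abs (b *: z) = b *: abs z.
  by move=> hb; rewrite /vl_abs vl_scalerU // scalerN.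
have [ha|ha] := leP 0 a; first by rewrite ger0_norm // hp.
by rewrite ltr0_norm // -hp ?oppr_ge0 ?ltW // scaleNr vl_absN.
Qed.
Lemma vl_ler_pZ2r (a b : R) (v : E) : le 0 v -> a <= b -> le (a *: v) (b *: v).
Proof.
move=> hv hab; apply/vl_subr_ge0; rewrite -scalerBl.
by have := vl_ler_wpZ2l (_ : 0 <= b - a) hv; rewrite scaler0; apply; rewrite subr_ge0.
Qed.

Lemma vl_meet_abs_ge0 (x y : E) : le 0 (meet (abs x) (abs y)).
Proof. by apply: vl_meet_ge0; apply: vl_abs_ge0. Qed.
Lemma vl_abs_meet (x y : E) : abs (meet (abs x) (abs y)) = meet (abs x) (abs y).
Proof. exact/vl_ger0_abs/vl_meet_abs_ge0. Qed.
Lemma vl_meet_absD_le (x y c : E) : le 0 c ->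
  le (meet (abs (x + y)) c) (meet (abs x) c + meet (abs y) c).
Proof.
move=> hc; apply: vl_le_trans (vl_meetDl_le (vl_abs_ge0 x) (vl_abs_ge0 y) hc).
by apply: vl_leI2; [apply: vl_ler_absD|apply: vl_lexx].
Qed.
Lemma vl_meet0_le (b a c : E) : le 0 a -> le a b -> le 0 c -> meet b c = 0 ->
  meet a c = 0.
Proof.
move=> ha hab hc hb; apply: vl_le_anti; last exact: vl_meet_ge0.
by rewrite -hb; apply: vl_leI2 => //; apply: vl_lexx.
Qed.

Lemma vl_archimedean_descent (Q : E -> Prop) (b0 c : E) : le 0 c -> Q b0 ->
  (forall b, Q b -> Q (b - c)) -> (forall b, Q b -> le 0 b) -> c = 0.
Proof.
move=> c0 hb0 hstep hpos.
have hQ i : Q (b0 - c *+ i).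
  by elim: i => [|i ih]; [rewrite mulr0n subr0|rewrite mulrSr opprD addrA; apply: hstep].
apply: (@vl_archimedean c b0 c0) => i.
by have := vl_lerD2r (c *+ i) (hpos _ (hQ i)); rewrite add0r subrK.
Qed.

Definition tail_sum (u : nat -> E) (n j : nat) : E := \sum_(i < j.+1) u (n + i)%N.

Lemma tail_sumSr u n j : tail_sum u n j.+1 = tail_sum u n j + u (n + j.+1)%N.
Proof. by rewrite /tail_sum big_ord_recr. Qed.
Lemma tail_sumSl u n j : tail_sum u n j.+1 = u n + tail_sum u n.+1 j.
Proof.
rewrite /tail_sum big_ord_recl addn0; congr (_ + _).
by apply: eq_bigr => i _; rewrite lift0 addnS addSn.
Qed.

Section PositiveTailSum.
Variables (u : nat -> E) (n : nat).
Hypothesis u0 : forall k, le 0 (u k).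

Lemma tail_sum_ge0 j : le 0 (tail_sum u n j).
Proof.
elim: j => [|j ih]; first by rewrite /tail_sum big_ord1 addn0.
by rewrite tail_sumSr; apply: vl_addr_ge0.
Qed.
Lemma tail_sum_homo j j' : (j <= j')%N -> le (tail_sum u n j) (tail_sum u n j').
Proof.
move=> /subnK <-; elim: (j' - j)%N => [|k ih]; first exact: vl_lexx.
by rewrite addSn tail_sumSr; apply: vl_le_trans ih (vl_lerDl _ _).
Qed.
Lemma tail_sum_ge_term j k : (n <= k <= n + j)%N -> le (u k) (tail_sum u n j).
Proof.
move=> /andP[nk kj]; rewrite -(subnKC nk).
apply: vl_le_trans (tail_sum_homo (_ : k - n <= j)%N); last by rewrite leq_subLR.
case: (k - n)%N => [|i]; first by rewrite /tail_sum big_ord1; apply: vl_lexx.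
by rewrite tail_sumSr [X in le _ X]addrC; apply/vl_lerDl/tail_sum_ge0.
Qed.

End PositiveTailSum.

Lemma normal_seq_tail_sum (D : nat -> set E) (u : nat -> E) :
  normal_seq D -> (forall n, D n.+1 `<=` D n) -> (forall k, D k (u k)) ->
  forall j n, D n (tail_sum u n.+1 j).
Proof.
move=> hn hdec hu; elim=> [|j ih] n.
  by rewrite /tail_sum big_ord1 addn0; apply: hdec.
by rewrite tail_sumSl; apply: hn; [apply: hu|apply: ih].
Qed.

End VectorLattice.

Lemma is_ideal_setT (R : realType) (E : VL R) : is_ideal [set: E].
Proof. by []. Qed.

Section Ideal.
Variables (R : realType) (E : VL R) (S : set E).
Hypothesis hS : is_ideal S.
Local Notation le := (@vl_le R E).
Local Notation join := (@vl_join R E).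
Local Notation meet := (@vl_meet R E).
Local Notation abs := (@vl_abs R E).

Lemma ideal0 : S 0. Proof. by case: hS. Qed.
Lemma idealD x y : S x -> S y -> S (x + y). Proof. by case: hS => _ h _ _; apply: h. Qed.
Lemma idealZ (a : R) x : S x -> S (a *: x). Proof. by case: hS => _ _ h _; apply: h. Qed.
Lemma ideal_abs_le x y : S y -> le (abs x) (abs y) -> S x.
Proof. by case: hS => _ _ _ h; apply: h. Qed.
Lemma idealN x : S x -> S (- x). Proof. by move=> h; rewrite -scaleN1r; apply: idealZ. Qed.
Lemma idealB x y : S x -> S y -> S (x - y).
Proof. by move=> h1 h2; apply: idealD => //; apply: idealN. Qed.
Lemma ideal_abs x : S x -> S (abs x).
Proof. by move=> h; apply: (ideal_abs_le h); rewrite vl_abs_id; apply: vl_lexx. Qed.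
Lemma ideal_le x y : S y -> le 0 x -> le x (abs y) -> S x.
Proof. by move=> hy h0 h; apply: (ideal_abs_le hy); rewrite vl_ger0_abs. Qed.
Lemma ideal_meet_abs x y : S y -> S (meet (abs x) (abs y)).
Proof. by move=> h; apply: (ideal_le h); [apply: vl_meet_abs_ge0|apply: vl_leIr]. Qed.

Lemma solid_le V x y : solid_in S V -> V y -> le 0 x -> le x (abs y) -> V x.
Proof.
move=> [sV hV] hy h0 h; apply: (hV _ _ _ hy); first exact: ideal_le (sV _ hy) h0 h.
by rewrite vl_ger0_abs.
Qed.
Lemma solidN V x : solid_in S V -> V x -> V (- x).
Proof.
by move=> [sV hV] hx; apply: hV (idealN (sV _ hx)) hx _; rewrite vl_absN; apply: vl_lexx.
Qed.

Definition tail_bound (u : nat -> E) (n : nat) (b : E) : Prop :=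
  le 0 b /\ forall k, (n <= k)%N -> le (u k) b.

Lemma oconv_dominated (s x : nat -> E) (l : E) : (forall n, S (s n)) ->
  (forall m n, (m <= n)%N -> le (s n) (s m)) -> (forall n, le 0 (s n)) ->
  (forall z, S z -> (forall n, le z (s n)) -> le z 0) ->
  (forall n, le (abs (x n - l)) (s n)) -> oconv_in S nat_le x l.
Proof.
move=> Ss s_decr s0 s_inf hx; exists nat, nat_le, s.
split; first exact: nat_le_directed.
do 4 (split; first by []).
by move=> m; exists m => n hmn; apply: vl_le_trans (hx n) (s_decr _ _ hmn).
Qed.

(* The dominating net is the set of tail bounds of [u], directed downwards. *)
Lemma oconv_tail_bounds (u : nat -> E) (c : E) : S c ->
  (forall k, le 0 (u k)) -> (forall k, le (u k) c) ->
  (forall w, le 0 w -> (forall n b, S b -> tail_bound u n b -> le w b) -> w = 0) ->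
  oconv_in S nat_le u 0.
Proof.
move=> Sc u0 uc hinf.
have c0 : le 0 c by apply: vl_le_trans (u0 0%N) (uc 0%N).
pose P (p : nat * E) := S p.2 /\ tail_bound u p.1 p.2.
pose B := {p | P p}.
have Bc : P (0%N, c) by [].
exists B, (fun p q : B => le (sval q).2 (sval p).2), (fun p : B => (sval p).2).
split.
  split=> [|p|p q r h1 h2|]; first by exists (exist P _ Bc).
  - exact: vl_lexx.
  - exact: vl_le_trans h2 h1.
  move=> [[n1 b1] [Sb1 [b10 hb1]]] [[n2 b2] [Sb2 [b20 hb2]]].
  have hb : P (maxn n1 n2, meet b1 b2).
    split.
      apply: (ideal_le Sb1); first exact: vl_meet_ge0.
      by rewrite vl_ger0_abs //; apply: vl_leIl.
    split=> [|k]; first exact: vl_meet_ge0.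
    by rewrite geq_max => /andP[k1 k2]; apply: vl_lexI; [apply: hb1|apply: hb2].
  by exists (exist P _ hb); split; [apply: vl_leIl|apply: vl_leIr].
split; first by move=> p; case: (svalP p).
split; first by [].
split; first by move=> p; case: (svalP p) => _ [].
split.
  move=> z _ hz; pose w := join 0 z.
  suff <- : w = 0 by apply: vl_leUr.
  apply: hinf => [|n b Sb hb]; first exact: vl_leUl.
  by apply: vl_leUx; [case: hb|apply: (hz (exist P (n, b) (conj Sb hb)))].
move=> p; exists (sval p).1 => k hk; rewrite subr0 vl_ger0_abs //.
by case: (svalP p) => _ [_]; apply.
Qed.

Lemma tail_bound_descent (u : nat -> E) n b0 w : S b0 -> tail_bound u n b0 -> le 0 w ->
  (forall b, S b -> tail_bound u n b -> le w b) ->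
  (forall k, (n <= k)%N -> meet (u k) w = 0) -> w = 0.
Proof.
move=> Sb0 hb0 w0 hw hperp.
pose Q b := S b /\ tail_bound u n b.
apply: (@vl_archimedean_descent _ _ Q b0) => //; last by move=> b [_ []].
move=> b [Sb hb]; have wb := hw b Sb hb; have [b0' hbk] := hb.
split; first by apply: idealB => //; apply: (ideal_le Sb w0); rewrite vl_ger0_abs.
split=> [|k hk]; first exact/vl_subr_ge0.
apply: vl_lerBrDr; rewrite -vl_meet0_join ?hperp //.
by apply: vl_leUx => //; apply: hbk.
Qed.

(* For a tail bound [b], [q <= b - u_k] for all [k >= n], so [b - q] is a tail bound too. *)
Lemma tail_sum_gap0 (u : nat -> E) n c w q : (forall k, le 0 (u k)) ->
  (forall k, le (u k) c) -> (forall b, tail_bound u n b -> le w b) -> le 0 q ->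
  (forall j, le q (join 0 (w - tail_sum u n j))) -> q = 0.
Proof.
move=> u0 uc hw q0 hq.
apply: (@vl_archimedean_descent _ _ (tail_bound u n) c) => //; last by move=> b [].
  by split=> [|k _]; [exact: vl_le_trans (u0 0%N) (uc 0%N)|apply: uc].
move=> b [b0 hb].
have hqb k : (n <= k)%N -> le q (b - u k).
  move=> hk; apply: vl_le_trans (hq (k - n)%N) _; apply: vl_leUx.
    exact/vl_subr_ge0/hb.
  apply: vl_lerD; first exact: hw.
  by apply/vl_lerN2/tail_sum_ge_term => //; rewrite subnKC // hk leqnn.
split=> [|k hk]; last exact/vl_ler_subC/hqb.
by apply/vl_subr_ge0; exact: vl_le_trans (hqb _ (leqnn _)) (vl_gerBl _ (u0 _)).
Qed.

Lemma disjoint_uoconv (d : nat -> E) : (forall n, S (d n)) ->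
  (forall m n, m <> n -> meet (abs (d m)) (abs (d n)) = 0) -> uoconv_in S nat_le d 0.
Proof.
move=> Sd hd y Sy.
pose u k := meet (abs (d k)) (abs y).
have -> : (fun k => meet (abs (d k - 0)) (abs y)) = u by apply: funext => k; rewrite subr0.
have u0 k : le 0 (u k) by apply: vl_meet_abs_ge0.
have Sy' : S (abs y) by apply: ideal_abs.
have hy : tail_bound u 0 (abs y) by split=> [|k _]; [apply: vl_abs_ge0|apply: vl_leIr].
apply: (oconv_tail_bounds Sy' u0 (fun k => vl_leIr _ _)) => w w0 hw.
have udisj j k : j <> k -> meet (u k) (u j) = 0.
  move=> hjk; apply: vl_le_anti; last exact: vl_meet_ge0.
  by rewrite -(hd k j (nesym hjk)); apply: vl_leI2; apply: vl_leIl.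
apply: (tail_bound_descent Sy' hy w0 (hw 0%N)) => j _.
rewrite vl_meetC.
apply: (tail_bound_descent (u := u) (n := j.+1) Sy' _ (vl_meet_ge0 w0 (u0 j))).
- by case: hy => h1 h2; split=> // k _; apply: h2.
- by move=> b Sb hb; apply: vl_le_trans (vl_leIl _ _) (hw _ _ Sb hb).
- move=> k hk; rewrite vl_meetC.
  apply: (vl_meet0_le (b := u j)); [exact: vl_meet_ge0|exact: vl_leIr|exact: u0|].
  by apply: udisj => e; move: hk; rewrite e ltnn.
Qed.

End Ideal.

Section LocallySolid.
Variables (R : realType) (E : VL R) (S : set E) (N : set (set E)).
Hypotheses (hS : is_ideal S) (hN : is_loc_solid_top S N).
Local Notation le := (@vl_le R E).
Local Notation meet := (@vl_meet R E).
Local Notation abs := (@vl_abs R E).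

Lemma nbhs_exists : exists U, N U. Proof. by have [h _] := hN. Qed.
Lemma nbhs_sub U : N U -> U `<=` S. Proof. by have [_ [h _]] := hN; apply: h. Qed.
Lemma nbhs_superset U V : N U -> U `<=` V -> V `<=` S -> N V.
Proof. by have [_ [_ [h _]]] := hN; apply: h. Qed.
Lemma nbhsI U V : N U -> N V -> N (U `&` V).
Proof. by have [_ [_ [_ [h _]]]] := hN; apply: h. Qed.
Lemma nbhs_solid U : N U -> exists V, [/\ N V, solid_in S V & V `<=` U].
Proof. by have [_ [_ [_ [_ [_ [_ [_ [h _]]]]]]]] := hN; apply: h. Qed.

Lemma nbhs0 U : N U -> U 0.
Proof.
have [_ [_ [_ [_ [habs _]]]]] := hN.
move=> hU; have [e [e0 he]] := habs U hU 0 (ideal0 hS).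
by have := he 0; rewrite scale0r normr0 => /(_ (ltW e0)).
Qed.

Lemma nbhs_separating x : S x -> x <> 0 -> exists U, N U /\ ~ U x.
Proof.
have [_ [_ [_ [_ [_ [_ [_ [_ hT]]]]]]]] := hN.
move=> Sx x0; apply/not_existsP => hn; apply: x0; apply: hT => // U hU.
by apply: contrapT => hnU; apply: (hn U).
Qed.

Lemma nbhs_half U : N U ->
  exists V, [/\ N V, solid_in S V & forall x y, V x -> V y -> U (x + y)].
Proof.
have [_ [_ [_ [_ [_ [_ [hadd _]]]]]]] := hN.
move=> /hadd [W [hW hWW]]; have [V [hV sV sub]] := nbhs_solid hW.
by exists V; split => // x y /sub hx /sub hy; apply: hWW.
Qed.

Definition solid_normal_seq (V : nat -> set E) : Prop :=
  [/\ forall n, N (V n), forall n, solid_in S (V n) & normal_seq V].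

Lemma solid_normal_seq_decr V : solid_normal_seq V ->
  forall n m, (n <= m)%N -> V m `<=` V n.
Proof.
move=> [hV _ hn] n m /subnK <-; elim: (m - n)%N => [|k ih] //.
by rewrite addSn => x hx; apply: ih; rewrite -[x]addr0; apply: hn => //; apply: nbhs0.
Qed.

Lemma bigcap_solid V : solid_normal_seq V -> solid_in S (\bigcap_n V n).
Proof.
move=> [hV sV _]; split=> [x /(_ 0%N I)|x y Sx hy hxy n _]; first exact: nbhs_sub.
by have [_ s] := sV n; apply: s Sx (hy n I) hxy.
Qed.

Lemma bigcapD V x y : solid_normal_seq V ->
  (\bigcap_n V n) x -> (\bigcap_n V n) y -> (\bigcap_n V n) (x + y).
Proof. by move=> [_ _ hn] hx hy n _; apply: hn; [apply: hx|apply: hy]. Qed.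

Lemma bigcap0 V : solid_normal_seq V -> (\bigcap_n V n) 0.
Proof. by move=> [hV _ _] n _; apply: nbhs0. Qed.

Lemma solid_normal_seq_below (B : nat -> set E) : (forall n, N (B n)) ->
  exists V, solid_normal_seq V /\ forall n, V n `<=` B n.
Proof.
move=> hB.
have hstep (p : nat * set E) : exists W : set E, N p.2 ->
    [/\ N W, solid_in S W, W `<=` B p.1.+1 & forall x y, W x -> W y -> p.2 (x + y)].
  case: p => n U /=; have [hU|] := pselect (N U); last by exists set0.
  have [V [hV sV hVV]] := nbhs_half hU.
  have [W [hW sW sub]] := nbhs_solid (nbhsI hV (hB n.+1)).
  by exists W => _; split => // [x /sub[]//|x y /sub[hx _] /sub[hy _]]; apply: hVV.
have [g hg] := choice hstep.
have [W0 [hW0 sW0 sub0]] := nbhs_solid (hB 0%N).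
pose V := fix V n := if n is k.+1 then g (k, V k) else W0.
have hNV n : N (V n) by elim: n => [|n ih] //=; have [] := hg (n, V n) ih.
exists V; split; first split => //.
- by case=> [|n] //=; have [] := hg (n, V n) (hNV n).
- by move=> n x y /= hx hy; have [_ _ _] := hg (n, V n) (hNV n); apply.
- by case=> [|n] //=; have [] := hg (n, V n) (hNV n).
Qed.

Lemma solid_normal_seq_bigcap (W : nat -> nat -> set E) :
  (forall i, solid_normal_seq (W i)) ->
  exists V, solid_normal_seq V /\ forall i, \bigcap_n V n `<=` \bigcap_n W i n.
Proof.
move=> hW; pose V n := [set z | forall i, (i <= n)%N -> W i n z].
have hNW i n : N (W i n) by case: (hW i).
have hVS m n : [set z | forall i, (i <= m)%N -> W i n z] `<=` S.
  by move=> z /(_ 0%N isT); apply: (nbhs_sub (hNW 0%N n)).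
have hNV n : N (V n).
  suff hm m : N [set z | forall i, (i <= m)%N -> W i n z] by apply: hm.
  elim: m => [|m ih].
    apply: nbhs_superset (hNW 0%N n) _ (hVS 0%N n) => z hz i.
    by rewrite leqn0 => /eqP ->.
  apply: nbhs_superset (nbhsI ih (hNW m.+1 n)) _ (hVS m.+1 n) => z [hz1 hz2] i.
  by rewrite leq_eqVlt => /orP[/eqP->//|]; apply: hz1.
exists V; split; first split => //.
- move=> n; split=> [|x y Sx hy hxy i hi]; first exact: hVS.
  have [_ sW _] := hW i.
  by have [_ s] := sW n; apply: s Sx (hy i hi) hxy.
- move=> n x y hx hy i hi; have [_ _ hn] := hW i.
  by apply: hn; [apply: hx|apply: hy]; apply: leqW.
- move=> i z hz n _; have [hin|hni] := leqP i n; first exact: hz.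
  by apply: (solid_normal_seq_decr (hW i) (ltnW hni)); apply: hz.
Qed.

Definition carrier_in (x : E) : Prop :=
  exists V, solid_normal_seq V /\ forall z, (\bigcap_n V n) z -> disj x z.

Lemma carrier_in0 : carrier_in 0.
Proof.
have [U hU] := nbhs_exists; have [V [hV _]] := solid_normal_seq_below (fun _ => hU).
by exists V; split => // z _; rewrite /disj vl_abs0 vl_meet0l //; apply: vl_abs_ge0.
Qed.

Lemma carrier_inD x y : carrier_in x -> carrier_in y -> carrier_in (x + y).
Proof.
move=> [V1 [h1 d1]] [V2 [h2 d2]].
have [V [hV sub]] := solid_normal_seq_bigcap (W := fun i => if i is 0 then V1 else V2)
  (fun i => if i is 0 then h1 else h2).
exists V; split => // z hz; apply: vl_le_anti; last exact: vl_meet_abs_ge0.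
have := vl_meet_absD_le x y (vl_abs_ge0 z).
by rewrite (d1 z (sub 0%N _ hz)) (d2 z (sub 1%N _ hz)) addr0.
Qed.

Lemma metrisable_solid_normal_seq : metrisable_in S N ->
  exists V, solid_normal_seq V /\ \bigcap_n V n `<=` [set 0].
Proof.
move=> [d [d0 dd _ dtri dopen]].
have S0 := ideal0 hS.
have hball (n : nat) : exists U, N U /\ U `<=` [set y | S y /\ d 0 y < n.+1%:R^-1].
  pose r : R := n.+1%:R^-1; have r0 : 0 < r by rewrite invr_gt0.
  pose O := [set y | S y /\ d 0 y < r].
  have hO : top_open_in S N O.
    apply/(dopen O) => [y []//|x [Sx dx]].
    exists (r - d 0 x); split=> [|y [Sy dy]]; first by rewrite subr_gt0.
    by split => //; have := dtri 0 x y S0 Sx Sy; lra.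
  have O0 : O 0 by split => //; rewrite (proj2 (dd 0 0 S0 S0)).
  have [U [hU hUO]] := hO.2 0 O0.
  exists U; split => // u hu.
  by have := hUO (0 + u) (ex_intro2 _ _ u hu erefl); rewrite add0r.
have [B hB] := choice hball.
have [V [hV subV]] := solid_normal_seq_below (fun n => (hB n).1).
exists V; split => // z hz.
have Sz : S z by apply: (bigcap_solid hV).1.
suff /(dd 0 z S0 Sz) : d 0 z = 0 by [].
apply/eqP; rewrite eq_le d0 // andbT.
apply/ler_addgt0Pr => e e0; rewrite add0r; apply/ltW.
have [n hn] : exists n : nat, n.+1%:R^-1 < e.
  have ei : 0 <= e^-1 by rewrite invr_ge0 ltW.
  exists (Num.bound e^-1); rewrite -[X in _ < X]invrK ltf_pV2 ?posrE ?invr_gt0 //.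
  by apply: lt_trans (Num.Theory.archi_boundP ei) _; rewrite ltr_nat.
by apply: lt_trans hn; have [] := (hB n).2 _ (subV n _ (hz n I)).
Qed.

Lemma metrisable_carrier_in x : metrisable_in S N -> carrier_in x.
Proof.
move=> /metrisable_solid_normal_seq [V [hV hV0]]; exists V; split => // z /hV0 ->.
by rewrite /disj vl_abs0 vl_meetC vl_meet0l //; apply: vl_abs_ge0.
Qed.

End LocallySolid.

Lemma carrier_in_setT (R : realType) (E : VL R) (N : set (set E)) (x : E) :
  carrier N x -> carrier_in setT N x.
Proof. by move=> [V [hNV hsV hnV [_ hx]]]; exists V. Qed.

Lemma net_tail_index (R : realType) (E : VL R) (N : set (set E))
    (A : Type) (leA : A -> A -> Prop) (x : A -> E) (l : E) :
  directed leA -> tconv N leA x l ->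
  exists next : A -> set E -> A, forall a U, [/\ leA a (next a U),
    N U -> (forall g, leA (next a U) g -> U (x g - l)) &
    ~ (exists top, forall b, leA b top) -> ~ leA (next a U) a].
Proof.
move=> [_ _ htrans hub] hx.
suff /choice[f hf] : forall p : A * set E, exists b, [/\ leA p.1 b,
    N p.2 -> (forall g, leA b g -> p.2 (x g - l)) &
    ~ (exists top, forall b, leA b top) -> ~ leA b p.1].
  by exists (fun a U => f (a, U)) => a U; apply: hf (a, U).
move=> [a U] /=.
have [a0 ha0] : exists a0, N U -> forall g, leA a0 g -> U (x g - l).
  by have [/hx[a0 ha0]|] := pselect (N U); [exists a0|exists a].
have [c [hac ha0c]] := hub a a0.
have [htop|hntop] := pselect (exists top, forall b, leA b top).
  by exists c; split => // hU g hcg; apply: ha0 => //; apply: htrans ha0c hcg.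
have [b hb] : exists b, ~ leA b a.
  by apply/not_existsP => hn; apply: hntop; exists a => b; apply: contrapT.
have [c' [hcc' hbc']] := hub c b.
exists c'; split => [|hU g hg|_ hc'a]; first exact: htrans hac hcc'.
- by apply: ha0 => //; apply: htrans ha0c (htrans _ _ _ hcc' hg).
- by apply: hb; apply: htrans hbc' hc'a.
Qed.

Section UoLebesgue.
Variables (R : realType) (E : VL R) (N : set (set E)).
Hypothesis hN : uo_Lebesgue_in setT N.
Local Notation le := (@vl_le R E).
Local Notation join := (@vl_join R E).
Local Notation meet := (@vl_meet R E).
Local Notation abs := (@vl_abs R E).

Let hT := is_ideal_setT E.

Lemma uo_Lebesgue_tconv (A : Type) (leA : A -> A -> Prop) (x : A -> E) (l : E) :
  directed leA -> uoconv_in setT leA x l -> tconv N leA x l.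
Proof. by move=> hA; apply: hN.2. Qed.

(* Every [w >= 0] below all tail bounds of [u] lies in every [D m]: [w] is the
   uo-limit of [w `&` (u_{m+2} + ... + u_{m+2+j})], and these sums lie in [D m.+1]. *)
Lemma normal_seq_tail_inf (D : nat -> set E) (u : nat -> E) (c w : E) :
  solid_normal_seq setT N D -> (forall k, D k (u k)) -> (forall k, le 0 (u k)) ->
  (forall k, le (u k) c) -> le 0 w -> (forall n b, tail_bound u n b -> le w b) ->
  forall m, D m w.
Proof.
move=> hD uD u0 uc w0 hw m; have [hND hsD hnD] := hD.
pose s j := tail_sum u m.+2 j; pose r j := w - meet w (s j).
have hdecr n : D n.+1 `<=` D n := solid_normal_seq_decr hT hN.1 hD (leqnSn n).
have sD j : D m.+1 (s j) := normal_seq_tail_sum hnD hdecr uD j m.+1.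
have rE j : r j = join 0 (w - s j) by apply: vl_subr_meet.
have r0 j : le 0 (r j) by rewrite rE; apply: vl_leUl.
have r_decr i j : (i <= j)%N -> le (r j) (r i).
  move=> hij; rewrite !rE; apply: vl_leU2; first exact: vl_lexx.
  by apply/vl_lerD2l/vl_lerN2/tail_sum_homo.
have r_inf z : (forall j, le z (r j)) -> le z 0.
  move=> hz; pose q := join 0 z; suff <- : q = 0 by apply: vl_leUr.
  apply: (tail_sum_gap0 u0 uc (hw m.+2) (vl_leUl _ _)) => j.
  by rewrite -rE; apply: vl_leUx; [apply: r0|apply: hz].
have huo : uoconv_in setT nat_le (fun j => meet w (s j)) w.
  move=> y _; apply: (oconv_dominated (s := r)) => // [z _|j]; first exact: r_inf.
  rewrite subr0 vl_abs_meet; apply: vl_le_trans (vl_leIl _ _) _.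
  by rewrite vl_abs_subC (vl_ger0_abs (r0 j)); apply: vl_lexx.
have [j0 hj0] := uo_Lebesgue_tconv nat_le_directed huo (hND m.+1).
have h1 : D m.+1 (w - meet w (s j0)).
  by rewrite -opprB; exact: (solidN hT (hsD _) (hj0 j0 (leqnn _))).
have h2 : D m.+1 (meet w (s j0)).
  have s0 : le 0 (s j0) by apply: tail_sum_ge0.
  apply: (solid_le hT (hsD _) (sD j0)); first exact: vl_meet_ge0.
  by rewrite vl_ger0_abs //; apply: vl_leIr.
by have := hnD m _ _ h2 h1; rewrite addrC subrK.
Qed.

Lemma normal_seq_uoconv (D : nat -> set E) (z : nat -> E) (l : E) :
  solid_normal_seq setT N D -> (forall n, D n (z n - l)) ->
  (forall k w, (\bigcap_n D n) w -> disj (z k - l) w) -> uoconv_in setT nat_le z l.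
Proof.
move=> hD zD hperp y _; have [_ hsD _] := hD.
pose u k := meet (abs (z k - l)) (abs y).
have u0 k : le 0 (u k) by apply: vl_meet_abs_ge0.
have uD k : D k (u k) by apply: (solid_le hT (hsD k) (zD k) (u0 k)); apply: vl_leIl.
apply: (oconv_tail_bounds hT (c := abs y) I u0 (fun k => vl_leIr _ _)) => w w0 hw.
have wD : (\bigcap_n D n) w.
  move=> m _; apply: (normal_seq_tail_inf hD uD u0 (fun k => vl_leIr _ _) w0).
  by move=> n b; apply: hw.
have hy : tail_bound u 0 (abs y) by split=> [|k _]; [apply: vl_abs_ge0|apply: vl_leIr].
apply: (tail_bound_descent hT I hy w0 (hw 0%N)) => k _.
apply: (vl_meet0_le (b := abs (z k - l))) => //; first exact: vl_leIl.
by have := hperp k w wD; rewrite /disj (vl_ger0_abs w0).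
Qed.

Section Diagonal.
Variables (A : Type) (x : A -> E) (l : E) (a0 : A) (next : A -> set E -> A).
Variable (sig : E -> nat -> set E).
Hypothesis hsig : forall e, solid_normal_seq setT N (sig e).

(* State [n]: the index [a_n] and the sets [m |-> \bigcap_(i < n) sig (x a_i - l) m]. *)
Fixpoint diag_state (n : nat) : A * (nat -> set E) :=
  if n is k.+1 then
    let C m := (diag_state k).2 m `&` sig (x (diag_state k).1 - l) m in
    (next (diag_state k).1 (C k.+1), C)
  else (next a0 setT, fun=> setT).

Lemma diag_stateE n m v :
  (diag_state n).2 m v <-> forall i, (i < n)%N -> sig (x (diag_state i).1 - l) m v.
Proof.
elim: n => [|n ih] //=; split=> [[/ih h1 h2] i|h].
  by rewrite ltnS leq_eqVlt => /orP[/eqP->//|]; apply: h1.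
by split; [apply/ih => i hi; apply: h; apply: ltnW|apply: h].
Qed.

Lemma diag_solid_normal_seq : solid_normal_seq setT N (fun n => (diag_state n).2 n).
Proof.
have hN0 : N setT.
  have [U hU] := nbhs_exists hN.1; apply: (nbhs_superset hN.1 hU) => //; exact: subsetT.
have hNC n m : N ((diag_state n).2 m).
  elim: n => [|n ih] //=; apply: (nbhsI hN.1 ih).
  by have [] := hsig (x (diag_state n).1 - l).
split=> // [n|n v w /diag_stateE hv /diag_stateE hw].
  split=> // v w _ /diag_stateE hw hvw; apply/diag_stateE => i hi.
  by have [_ /(_ n) [_ s] _] := hsig (x (diag_state i).1 - l); apply: s I (hw i hi) hvw.
apply/diag_stateE => i hi; have [_ _ hn] := hsig (x (diag_state i).1 - l).
by apply: hn; [apply: hv|apply: hw]; apply: ltnW.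
Qed.

Lemma diag_bigcap k :
  \bigcap_n (diag_state n).2 n `<=` \bigcap_n sig (x (diag_state k).1 - l) n.
Proof.
move=> v hv n _; have [hkn|hnk] := ltnP k n.
  by have /diag_stateE := hv n I; apply.
apply: (solid_normal_seq_decr hT hN.1 (hsig _) (leq_trans hnk (leqnSn k))).
by have /diag_stateE := hv k.+1 I; apply.
Qed.

End Diagonal.

Hypothesis hC : forall x : E, carrier N x.

Lemma uo_Lebesgue_embedded_seq (A : Type) (leA : A -> A -> Prop) (x : A -> E) (l : E) :
  directed leA -> tconv N leA x l ->
  exists al : nat -> A,
    [/\ embedded_seq leA al, uoconv_in setT nat_le (fun n => x (al n)) l &
        tconv N nat_le (fun n => x (al n)) l].
Proof.
move=> hA hx; have [next hnext] := net_tail_index hA hx.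
have [[a0 _] _ _ _] := hA.
have [sig hsig] := choice (fun e => carrier_in_setT (hC e)).
pose st := diag_state x l a0 next sig; pose al n := (st n).1.
have hD := diag_solid_normal_seq x l a0 next (fun e => (hsig e).1).
have huo : uoconv_in setT nat_le (fun n => x (al n)) l.
  apply: (normal_seq_uoconv hD) => [[//|n]|k w].
    have [_ hn _] := hnext (al n) ((st n.+1).2 n.+1); apply: hn.
      by have [hND _ _] := hD; apply: hND.
    by have [_ hr _ _] := hA; apply: hr.
  move=> /(diag_bigcap (fun e => (hsig e).1) k).
  exact: (hsig _).2.
exists al; split => //; last exact: uo_Lebesgue_tconv nat_le_directed huo.
split=> [n|hntop n]; first by have [] := hnext (al n) ((st n.+1).2 n.+1).
by have [_ _] := hnext (al n) ((st n.+1).2 n.+1); apply.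
Qed.

Lemma uo_Lebesgue_seqP (x : nat -> E) (l : E) :
  tconv N nat_le x l <->
  (forall p : nat -> nat, strict_incr p ->
     exists q : nat -> nat, strict_incr q /\
       uoconv_in setT nat_le (fun n => x (p (q n))) l).
Proof.
split=> [hx p hp|hsub].
  have hxp : tconv N nat_le (fun n => x (p n)) l.
    move=> U hU; have [n0 hn0] := hx U hU; exists n0 => n hn.
    by apply: hn0; apply: leq_trans hn (strict_incr_ge hp n).
  have [q [[_ hq] huo _]] := uo_Lebesgue_embedded_seq nat_le_directed hxp.
  exists q; split => // n; rewrite ltnNge; apply/negP => hle.
  by apply: (hq _ n hle) => -[top /(_ top.+1)]; rewrite /nat_le ltnn.
apply: contrapT => hnx.
have [U [hU hnU]] : exists U, N U /\ forall n0, exists n, (n0 <= n)%N /\ ~ U (x n - l).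
  apply/not_existsP => hn; apply: hnx => U hU; apply: contrapT => hev.
  apply: (hn U); split => // n0; apply/not_existsP => hn2; apply: hev.
  by exists n0 => n hn'; apply: contrapT => hUn; apply: (hn2 n).
have [g hg] := choice hnU.
pose p := fix p n := if n is k.+1 then g (p k).+1 else g 0%N.
have hp : strict_incr p by move=> n; exact: (hg (p n).+1).1.
have hpU n : ~ U (x (p n) - l).
  by case: n => [|n]; [exact: (hg 0%N).2|exact: (hg (p n).+1).2].
have [q [_ huo]] := hsub p hp.
have [n0 hn0] := uo_Lebesgue_tconv nat_le_directed huo hU.
exact: hpU (q n0) (hn0 n0 (leqnn _)).
Qed.

End UoLebesgue.

Section CountableOrderBasis.
Variables (R : realType) (E : VL R) (S : set E) (N : set (set E)).
Hypothesis hS : is_ideal S.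
Local Notation le := (@vl_le R E).
Local Notation meet := (@vl_meet R E).
Local Notation abs := (@vl_abs R E).

Definition disjoint_system (A : set E) : Prop :=
  A `<=` [set d | [/\ S d, le 0 d & d <> 0]] /\
  forall a b, A a -> A b -> a <> b -> meet a b = 0.

Lemma maximal_disjoint_system :
  exists A, disjoint_system A /\ forall B, A `<` B -> ~ disjoint_system B.
Proof.
apply: Zorn_bigcup => C hC htot; split=> [a [X CX Xa]|a b [X CX Xa] [Y CY Yb] ab].
  exact: (hC X CX).1.
have [XY|YX] := htot X Y CX CY.
- exact: (hC Y CY).2 a b (XY a Xa) Yb ab.
- exact: (hC X CX).2 a b Xa (YX b Yb) ab.
Qed.

Lemma maximal_disjoint_system_order_basis A : disjoint_system A ->
  (forall B, A `<` B -> ~ disjoint_system B) -> is_order_basis_in S (A `|` [set 0]).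
Proof.
move=> [hA hdisj] hmax; split.
- by move=> a [/hA[]//|->]; apply: ideal0.
- by exists 0; right.
move=> x [Sx hx]; apply: contrapT => x0.
have ax0 : abs x <> 0 by move=> /vl_abs_eq0.
have hxa a : A a -> meet a (abs x) = 0.
  move=> ha; have [_ a0 _] := hA a ha.
  by have := hx a (or_introl ha); rewrite /disj vl_meetC (vl_ger0_abs a0).
apply: (hmax (A `|` [set abs x])); first split=> [a|]; first by left.
  by move=> /(_ (abs x) (or_intror erefl)) /hxa; rewrite vl_meet_l //; apply: vl_lexx.
split=> [a [/hA//|->]|a b [ha|->] [hb|->] hab].
- by split; [exact: ideal_abs|exact: vl_abs_ge0|].
- exact: hdisj.
- exact: hxa.
- by rewrite vl_meetC; apply: hxa.
- by case: hab.
Qed.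

Hypothesis hN : uo_Lebesgue_in S N.

Lemma disjoint_system_outside_nbhs_finite A U : disjoint_system A -> N U ->
  finite_set [set a | A a /\ ~ U a].
Proof.
move=> [hA hdisj] hU; apply: contrapT => /infinite_set_injective [d [hd dinj]].
have dA n : A (d n) by have [] := hd n.
have Sd n : S (d n) by have [] := hA _ (dA n).
have huo : uoconv_in S nat_le d 0.
  apply: (disjoint_uoconv hS) => // m n hmn.
  have [_ m0 _] := hA _ (dA m); have [_ n0 _] := hA _ (dA n).
  by rewrite !vl_ger0_abs //; apply: hdisj => // /dinj.
have [n0 hn0] := hN.2 nat nat_le d 0 nat_le_directed Sd (ideal0 hS) huo U hU.
by have [_] := hd n0; have := hn0 n0 (leqnn _); rewrite subr0.
Qed.

Lemma metrisable_uo_Lebesgue_countable_order_basis : metrisable_in S N ->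
  has_countable_order_basis_in S.
Proof.
move=> /(metrisable_solid_normal_seq hS hN.1) [V [[hNV _ _] hV0]].
have [A [hA hmax]] := maximal_disjoint_system.
exists (A `|` [set 0]); split; first exact: maximal_disjoint_system_order_basis.
pose Ak k := [set a | A a /\ ~ V k a] `|` [set 0].
apply: (sub_countable (B := \bigcup_(k in [set: nat]) Ak k)).
  apply: subset_card_le => a [ha|->]; last by exists 0%N => //; right.
  have [_ _ a0] := hA.1 a ha.
  have [k hk] : exists k, ~ V k a.
    by apply/not_existsP => hn; apply: a0; apply: hV0 => k _; apply: contrapT.
  by exists k => //; left.
apply: bigcup_countable => // k _; apply: finite_set_countable.
rewrite finite_setU; split; last exact: finite_set1.
exact: disjoint_system_outside_nbhs_finite.
Qed.

End CountableOrderBasis.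

Section UnboundedTopology.
Variables (R : realType) (E : VL R) (F : set E) (NF : set (set E)).
Hypotheses (hI : is_ideal F) (hD : order_dense F) (hL : o_Lebesgue_in F NF).
Local Notation le := (@vl_le R E).
Local Notation join := (@vl_join R E).
Local Notation meet := (@vl_meet R E).
Local Notation abs := (@vl_abs R E).

Let hN := hL.1.

Definition ubasic (V : set E) (y : E) : set E := [set x | V (meet (abs x) (abs y))].

Lemma uF_ubasic V y : NF V -> solid_in F V -> F y -> uF F NF (ubasic V y).
Proof. by move=> hV sV Fy; exists V, y; split. Qed.

Lemma ubasic_le V y y' x z : solid_in F V -> le (abs y') (abs y) ->
  le (abs x) (abs z) -> ubasic V y z -> ubasic V y' x.
Proof.
move=> sV hy hxz hz; apply: (solid_le hI sV hz); first exact: vl_meet_abs_ge0.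
by rewrite vl_abs_meet; apply: vl_leI2.
Qed.

Lemma ubasicD V W y : solid_in F V -> (forall a b, W a -> W b -> V (a + b)) ->
  forall a b, ubasic W y a -> ubasic W y b -> ubasic V y (a + b).
Proof.
move=> sV hW a b ha hb; apply: (solid_le hI sV (hW _ _ ha hb)).
  exact: vl_meet_abs_ge0.
rewrite (vl_ger0_abs (vl_addr_ge0 (vl_meet_abs_ge0 a y) (vl_meet_abs_ge0 b y))).
exact: vl_meet_absD_le (vl_abs_ge0 _).
Qed.

(* [|t x| /\ |y|] decreases to [0] in order as [t] decreases to [0]. *)
Lemma ubasic_absorbing V y x : NF V -> solid_in F V -> F y ->
  exists e : R, 0 < e /\ forall t : R, `|t| <= e -> ubasic V y (t *: x).
Proof.
move=> hV sV hy; pose c (n : nat) : R := n.+1%:R^-1.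
have c0 n : 0 <= c n by rewrite invr_ge0.
have c_decr m n : (m <= n)%N -> c n <= c m.
  by move=> h; rewrite lef_pV2 ?posrE // ler_nat ltnS.
pose s n := meet (abs (c n *: x)) (abs y).
have s0 n : le 0 (s n) by apply: vl_meet_abs_ge0.
have Fs n : F (s n) by apply: (ideal_meet_abs hI).
have hoc : oconv_in F nat_le s 0.
  apply: (oconv_dominated (s := s)) => // [m n hmn|z Fz hz|n].
  - apply: vl_leI2; last exact: vl_lexx.
    by rewrite !vl_absZ !ger0_norm //; apply: vl_ler_pZ2r (vl_abs_ge0 _) (c_decr _ _ hmn).
  - pose p := join 0 z; suff <- : p = 0 by apply: vl_leUr.
    apply: (@vl_archimedean _ _ p (abs x)); first exact: vl_leUl.
    case=> [|j]; first by rewrite mulr0n; apply: vl_abs_ge0.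
    have hp : le p (c j *: abs x).
      have hcx : abs (c j *: x) = c j *: abs x by rewrite vl_absZ ger0_norm.
      rewrite -hcx; apply: vl_leUx; first exact: vl_abs_ge0.
      exact: vl_le_trans (hz j) (vl_leIl _ _).
    have := vl_ler_wpZ2l (_ : 0 <= j.+1%:R :> R) hp.
    by rewrite scalerA mulfV ?pnatr_eq0 // scale1r scaler_nat; apply; exact: ler0n.
  - by rewrite subr0 vl_ger0_abs //; apply: vl_lexx.
have [n0 hn0] := hL.2 nat _ s 0 nat_le_directed Fs (ideal0 hI) hoc V hV.
exists (c n0); split=> [|t ht]; first by rewrite invr_gt0.
have hs := hn0 n0 (leqnn _); rewrite subr0 in hs.
apply: (solid_le hI sV hs); first exact: vl_meet_abs_ge0.
rewrite (vl_ger0_abs (s0 n0)); apply: vl_leI2; last exact: vl_lexx.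
by rewrite !vl_absZ (ger0_norm (c0 n0)); apply: vl_ler_pZ2r (vl_abs_ge0 _) ht.
Qed.

Lemma uF_setI U1 U2 : uF F NF U1 -> uF F NF U2 -> uF F NF (U1 `&` U2).
Proof.
move=> [V1 [y1 [hV1 sV1 hy1 sub1]]] [V2 [y2 [hV2 sV2 hy2 sub2]]].
have [V [hV sV sub]] := nbhs_solid hN (nbhsI hN hV1 hV2).
pose y := abs y1 + abs y2.
have hy : abs y = y by apply/vl_ger0_abs/vl_addr_ge0; apply: vl_abs_ge0.
have Fy : F y by apply: (idealD hI); apply: (ideal_abs hI).
have y1y : le (abs y1) (abs y) by rewrite hy; apply/vl_lerDl/vl_abs_ge0.
have y2y : le (abs y2) (abs y) by rewrite hy /y addrC; apply/vl_lerDl/vl_abs_ge0.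
exists V, y; split => // x /sub[hx1 hx2]; split.
- exact/sub1/(ubasic_le sV1 y1y (vl_lexx _)).
- exact/sub2/(ubasic_le sV2 y2y (vl_lexx _)).
Qed.

Lemma uF_hausdorff x : (forall U, uF F NF U -> U x) -> x = 0.
Proof.
move=> hx; apply: contrapT => x0.
have [w [Fw w0 wn0 wx]] := hD (vl_abs_ge0 x) (fun h => x0 (vl_abs_eq0 h)).
have [U [hU nUw]] := nbhs_separating hN Fw wn0.
have [V [hV sV sub]] := nbhs_solid hN hU.
have := hx _ (uF_ubasic hV sV Fw); rewrite /ubasic /= (vl_ger0_abs w0) vl_meetC.
by rewrite vl_meet_l // => /sub.
Qed.

Lemma uF_loc_solid : is_loc_solid_top setT (uF F NF).
Proof.
have ubasicP U : uF F NF U ->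
    exists V y, [/\ NF V, solid_in F V, F y & ubasic V y `<=` U] by [].
split.
  have [U0 hU0] := nbhs_exists hN; have [V [hV sV _]] := nbhs_solid hN hU0.
  by exists setT, V, 0; split => //; apply: ideal0.
split; first by [].
split.
  move=> U W /ubasicP[V [y [hV sV hy sub]]] hUW _.
  by exists V, y; split => //; apply: subset_trans hUW.
split; first exact: uF_setI.
split.
  move=> U /ubasicP[V [y [hV sV hy sub]]] x _.
  by have [e [e0 he]] := ubasic_absorbing x hV sV hy; exists e; split => // t /he /sub.
split.
  move=> U /ubasicP[V [y [hV sV hy sub]]].
  exists (ubasic V y); split => //; first exact: uF_ubasic.
  move=> x t hx ht; apply: (ubasic_le sV (vl_lexx _) _ hx).
  by rewrite vl_absZ; have := vl_ler_pZ2r (vl_abs_ge0 x) ht; rewrite scale1r.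
split.
  move=> U /ubasicP[V [y [hV sV hy sub]]]; have [V' [hV' sV' hVV]] := nbhs_half hN hV.
  exists (ubasic V' y); split => [|x1 x2 h1 h2]; first exact: uF_ubasic.
  exact/sub/(ubasicD sV hVV).
split; last by move=> x _; apply: uF_hausdorff.
move=> U /ubasicP[V [y [hV sV hy sub]]].
exists (ubasic V y); split => //; first exact: uF_ubasic.
by split => // x z _ hz hxz; apply: (ubasic_le sV (vl_lexx _) hxz hz).
Qed.

Lemma uF_uo_Lebesgue : uo_Lebesgue_in setT (uF F NF).
Proof.
split=> [|A leA x l hA _ _ huo U [V [y [hV sV hy sub]]]]; first exact: uF_loc_solid.
have [B [leB [yb [hB [_ [yb_decr [yb0 [yb_inf yb_ev]]]]]]]] := huo y I.
pose m a := meet (abs (x a - l)) (abs y).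
have hoc : oconv_in F leA m 0.
  exists B, leB, (fun b => meet (yb b) (abs y)); split => //.
  split.
    move=> b; apply: (ideal_le hI hy); last exact: vl_leIr.
    by apply: vl_meet_ge0 => //; apply: vl_abs_ge0.
  split; first by move=> b1 b2 h; apply: vl_leI2; [apply: yb_decr|apply: vl_lexx].
  split; first by move=> b; apply: vl_meet_ge0 => //; apply: vl_abs_ge0.
  split=> [z Fz hz|b0].
    by apply: yb_inf => // b; apply: vl_le_trans (hz b) (vl_leIl _ _).
  have [a0 ha0] := yb_ev b0; exists a0 => a ha.
  have := ha0 a ha; rewrite !subr0 vl_abs_meet => h.
  by apply: vl_lexI => //; apply: vl_leIr.
have Fm a : F (m a) by apply: (ideal_meet_abs hI).
have [a0 ha0] := hL.2 A leA m 0 hA Fm (ideal0 hI) hoc V hV.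
by exists a0 => a ha; apply: sub; have := ha0 a ha; rewrite subr0.
Qed.

Definition below_bigcap (V : nat -> set E) (w : E) : set E :=
  [set d | [/\ (\bigcap_n V n) d, le 0 d & le d w]].

Lemma below_bigcapU V w a b : solid_normal_seq F NF V ->
  below_bigcap V w a -> below_bigcap V w b -> below_bigcap V w (join a b).
Proof.
move=> hV [Va a0 aw] [Vb b0 bw]; have ab0 := vl_le_trans a0 (vl_leUl a b).
split=> //; last exact: vl_leUx.
apply: (solid_le hI (bigcap_solid hN hV) (bigcapD hV Va Vb) ab0).
rewrite vl_ger0_abs; last exact: vl_addr_ge0.
by apply: vl_leUx; [apply: vl_lerDl|rewrite addrC; apply: vl_lerDl].
Qed.

Lemma below_bigcap_gap V w p n : solid_normal_seq F NF V -> le 0 w -> le 0 p ->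
  (forall d, below_bigcap V w d -> le p (w - d)) -> (\bigcap_k V k) n -> disj p n.
Proof.
move=> hV w0 p0 hp Vn; pose q := meet (abs p) (abs n).
have q0 : le 0 q by apply: vl_meet_abs_ge0.
have qp : le q p by rewrite -[p in le _ p](vl_ger0_abs p0); apply: vl_leIl.
have Vq : (\bigcap_k V k) q.
  by apply: (solid_le hI (bigcap_solid hN hV) Vn q0); apply: vl_leIr.
have Dq j : below_bigcap V w (q *+ j).
  elim: j => [|j Dj].
    by rewrite mulr0n; split; [exact: (bigcap0 hI hN hV)|apply: vl_lexx|].
  have [Vj j0 _] := Dj; rewrite mulrSr.
  split; [exact: (bigcapD hV Vj Vq)|exact: vl_addr_ge0|].
  have := vl_lerD2l (q *+ j) (vl_le_trans qp (hp _ Dj)).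
  by rewrite addrCA subrr addr0.
by apply: (@vl_archimedean _ _ q w q0) => j; case: (Dq j).
Qed.

(* [w] is the supremum of the elements of [\bigcap_n V n] below it, hence, by the
   o-Lebesgue property, their limit. *)
Lemma bigcap_sup_mem V w : solid_normal_seq F NF V -> F w -> le 0 w ->
  (forall p, le 0 p -> p <> 0 -> le p w -> exists n, (\bigcap_k V k) n /\ ~ disj p n) ->
  V 0%N w.
Proof.
move=> hV Fw w0 hmeet.
have D0 : below_bigcap V w 0 by split=> //; [exact: (bigcap0 hI hN hV)|apply: vl_lexx].
pose T := {d | below_bigcap V w d}; pose leT (a b : T) := le (sval a) (sval b).
have hT : directed leT.
  split=> [|a|a b c|a b]; [by exists (exist _ 0 D0)|exact: vl_lexx|exact: vl_le_trans|].
  exists (exist _ _ (below_bigcapU hV (svalP a) (svalP b))).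
  by split; [apply: vl_leUl|apply: vl_leUr].
have FT (a : T) : F (sval a).
  by have [Va _ _] := svalP a; apply: (bigcap_solid hN hV).1 Va.
have dw d : below_bigcap V w d -> le 0 (w - d) by case=> _ _ dw; apply/vl_subr_ge0.
have hoc : oconv_in F leT (fun a : T => sval a) w.
  exists T, leT, (fun b : T => w - sval b); split => //.
  split; first by move=> b; apply: (idealB hI).
  split; first by move=> b1 b2 h; apply/vl_lerD2l/vl_lerN2.
  split; first by move=> b; apply/dw/svalP.
  split=> [z Fz hz|b0]; last first.
    exists b0 => a ha; rewrite vl_abs_subC vl_ger0_abs; last exact/dw/svalP.
    exact/vl_lerD2l/vl_lerN2.
  pose p := join 0 z; suff <- : p = 0 by apply: vl_leUr.
  have hp d : below_bigcap V w d -> le p (w - d).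
    by move=> Dd; apply: vl_leUx; [apply: dw|apply: (hz (exist _ d Dd))].
  apply: contrapT => pn0; have p0 : le 0 p by apply: vl_leUl.
  have pw : le p w by have := hp 0 D0; rewrite subr0.
  have [n [Vn hpn]] := hmeet p p0 pn0 pw.
  exact: hpn (below_bigcap_gap hV w0 p0 hp Vn).
have [hNV hsV hnV] := hV.
have [a0 ha0] := hL.2 T leT (fun a : T => sval a) w hT FT Fw hoc _ (hNV 1%N).
have h1 : V 1%N (sval a0) by have [Va _ _] := svalP a0; apply: Va.
have := hnV 0%N _ _ h1 (solidN hI (hsV 1%N) (ha0 a0 (vl_lexx _))).
by rewrite opprB addrC subrK.
Qed.

Lemma carrier_in_dense w : F w -> le 0 w -> w <> 0 ->
  exists t, [/\ carrier_in F NF t, le 0 t, t <> 0 & le t w].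
Proof.
move=> Fw w0 wn0; have [U [hU nUw]] := nbhs_separating hN Fw wn0.
have [V [hV sub]] := solid_normal_seq_below hN (fun _ : nat => hU).
apply: contrapT => ht; apply/nUw/(sub 0%N)/(bigcap_sup_mem hV) => // p p0 pn0 pw.
apply/not_existsP => hp; apply: ht; exists p; split => //.
by exists V; split => // n Vn; apply: contrapT => hpn; apply: (hp n).
Qed.

Lemma sup_carrier_in x :
  is_sup_of [set v | [/\ F v, carrier_in F NF v, le 0 v & le v (abs x)]] (abs x).
Proof.
split=> [d []//|b hb]; pose b' := meet b (abs x).
have [/eqP|en0] := pselect (abs x - b' = 0).
  by rewrite subr_eq0 => /eqP ->; apply: vl_leIl.
have [w [Fw w0 wn0 we]] := hD (proj2 (vl_subr_ge0 _ _) (vl_leIr b (abs x))) en0.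
have [t [ct t0 tn0 tw]] := carrier_in_dense Fw w0 wn0.
have Ft : F t by apply: (ideal_le hI Fw t0); rewrite vl_ger0_abs.
suff hj j : [/\ F (t *+ j), carrier_in F NF (t *+ j), le 0 (t *+ j) & le (t *+ j) (abs x)].
  by case: tn0; apply: (@vl_archimedean _ _ t (abs x) t0) => j; case: (hj j).
elim: j => [|j [h1 h2 h3 h4]].
  rewrite mulr0n; split; [exact: ideal0|exact: carrier_in0 hN|exact: vl_lexx|].
  exact: vl_abs_ge0.
rewrite mulrSr; split; [exact: idealD|exact: carrier_inD|exact: vl_addr_ge0|].
have hb' : le (t *+ j) b' by apply: vl_lexI => //; apply: hb.
by have := vl_lerD hb' (vl_le_trans tw we); rewrite [b' + _]addrC subrK.
Qed.

Lemma ubasic_solid_normal_seq V (y : nat -> E) : solid_normal_seq F NF V ->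
  (forall n, F (y n)) -> (forall n, le 0 (y n)) -> (forall n, le (y n) (y n.+1)) ->
  solid_normal_seq setT (uF F NF) (fun n => ubasic (V n) (y n)).
Proof.
move=> [hNV hsV hnV] Fy y0 y_incr; split=> [n|n|n a b ha hb].
- exact: uF_ubasic.
- by split=> // a b _ hb hab; apply: (ubasic_le (hsV n) (vl_lexx _) hab hb).
have hyy : le (abs (y n)) (abs (y n.+1)) by rewrite !vl_ger0_abs.
exact: ubasicD (hsV n) (hnV n) _ _ (ubasic_le (hsV n.+1) hyy (vl_lexx _) ha)
  (ubasic_le (hsV n.+1) hyy (vl_lexx _) hb).
Qed.

Lemma bigcap_ubasic_disj V (y : nat -> E) (z : E) k : solid_normal_seq F NF V ->
  (forall n, le 0 (y n)) -> (forall m n, (m <= n)%N -> le (y m) (y n)) ->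
  (forall n, ubasic (V n) (y n) z) -> (forall w, (\bigcap_n V n) w -> disj (y k) w) ->
  disj z (y k).
Proof.
move=> hV y0 y_homo hz hk; have [_ hsV _] := hV.
have zk0 : le 0 (meet (abs z) (y k)) by apply/vl_meet_ge0/y0/vl_abs_ge0.
have Vzk : (\bigcap_n V n) (meet (abs z) (y k)).
  move=> n _; have [nk|kn] := leqP n k.
    apply: (solid_normal_seq_decr hI hN hV nk).
    by have := hz k; rewrite /ubasic vl_ger0_abs.
  apply: (solid_le hI (hsV n) (hz n) zk0); rewrite vl_abs_meet (vl_ger0_abs (y0 n)).
  by apply: vl_leI2; [apply: vl_lexx|apply: y_homo _ _ (ltnW kn)].
have := hk _ Vzk; rewrite /disj (vl_ger0_abs zk0) (vl_ger0_abs (y0 k)) vl_meetC.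
by rewrite vl_meet_l //; apply: vl_leIr.
Qed.

Lemma carrier_uF_countable x (v : nat -> E) :
  (forall i, [/\ F (v i), carrier_in F NF (v i) & le 0 (v i)]) ->
  (forall z, (forall i, meet (abs z) (v i) = 0) -> disj x z) ->
  carrier (uF F NF) x.
Proof.
move=> hv hx.
have [W hW] := choice (fun i => let: And3 _ h _ := hv i in h).
have [V [hV subV]] := solid_normal_seq_bigcap hI hN (fun i => (hW i).1).
have v0 i : le 0 (v i) by case: (hv i).
pose y n := tail_sum v 0 n.
have y0 n : le 0 (y n) by apply: tail_sum_ge0.
have y_homo m n : (m <= n)%N -> le (y m) (y n) by apply: tail_sum_homo.
have Fy n : F (y n).
  elim: n => [|n ih]; first by rewrite /y /tail_sum big_ord1; case: (hv 0%N).
  by rewrite /y tail_sumSr; apply: (idealD hI) => //; case: (hv (0 + n.+1)%N).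
have yV k w : (\bigcap_n V n) w -> disj (y k) w.
  move=> Vw; elim: k => [|k ih].
    by rewrite /y /tail_sum big_ord1; apply: (hW 0%N).2 (subV 0%N _ Vw).
  rewrite /disj /y tail_sumSr; apply: vl_le_anti; last exact: vl_meet_abs_ge0.
  have := vl_meet_absD_le (y k) (v (0 + k.+1)%N) (vl_abs_ge0 w).
  by rewrite ih ((hW _).2 _ (subV _ _ Vw)) addr0.
have [hNU hsU hnU] := ubasic_solid_normal_seq hV Fy y0 (fun n => y_homo _ _ (leqnSn n)).
exists (fun n => ubasic (V n) (y n)); split=> //; split=> // z hz.
apply: hx => i; rewrite vl_meetC; apply: (vl_meet0_le (b := y i)).
- exact: v0.
- by apply: (tail_sum_ge_term v0); rewrite add0n leqnn leq0n.
- exact: vl_abs_ge0.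
have := bigcap_ubasic_disj hV y0 y_homo (fun n => hz n I) (yV i).
by rewrite /disj (vl_ger0_abs (y0 i)) vl_meetC.
Qed.

Lemma carrier_uF_countable_sup x : countable_sup_property E -> carrier (uF F NF) x.
Proof.
move=> csp; have [D' [sub cD [_ supD]]] := csp _ _ (sup_carrier_in x).
have [v [hv1 hv2]] := countable_enum 0 cD.
apply: (carrier_uF_countable (v := v)) => [i|z hz].
  case: (hv1 i) => [/sub[]//|->].
  by split; [exact: ideal0|exact: carrier_in0 hN|exact: vl_lexx].
pose c := meet (abs z) (abs x); have c0 : le 0 c by apply: vl_meet_abs_ge0.
suff /vl_ler_subC : le (abs x) (abs x - c).
  by rewrite subrr /disj vl_meetC => hc; apply: vl_le_anti.
apply: supD => d Dd; have [i _ vi] := hv2 d Dd; have [_ _ d0 dx] := sub d Dd.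
have hdc : meet d c = 0.
  rewrite vl_meetC; apply: (vl_meet0_le (b := abs z)) => //; first exact: vl_leIl.
  by rewrite -vi; apply: hz.
have hs : le (d + c) (abs x).
  by rewrite -vl_meet0_join //; apply: vl_leUx => //; apply: vl_leIr.
exact: vl_lerBrDr.
Qed.

Lemma carrier_uF_metrisable_basis x : metrisable_in F NF ->
  has_countable_order_basis_in F -> carrier (uF F NF) x.
Proof.
move=> hm [A [[AF _ hA] cA]]; have [v [hv1 hv2]] := countable_enum 0 cA.
have FA a : A a \/ a = 0 -> F a by case=> [/AF //|->]; apply: ideal0.
apply: (carrier_uF_countable (v := fun i => abs (v i))) => [i|z hz].
  split; [exact/(ideal_abs hI)/FA|exact: metrisable_carrier_in|exact: vl_abs_ge0].
suff -> : z = 0 by rewrite /disj vl_abs0 vl_meetC vl_meet0l //; apply: vl_abs_ge0.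
apply: contrapT => z0.
have [w [Fw w0 wn0 wz]] := hD (vl_abs_ge0 z) (fun h => z0 (vl_abs_eq0 h)).
apply/wn0/hA; split=> // a Aa; have [i _ vi] := hv2 a Aa.
rewrite /disj (vl_ger0_abs w0); apply: (vl_meet0_le (b := abs z)) => //.
- exact: vl_abs_ge0.
- by rewrite -vi; apply: hz.
Qed.

Lemma carrier_uF_setT : countable_sup_property E \/
    (metrisable_in F NF /\ has_countable_order_basis_in F) ->
  carrier (uF F NF) = setT.
Proof.
move=> hcase; apply/seteqP; split=> // x _.
case: hcase => [csp|[hm hb]]; first exact: carrier_uF_countable_sup.
exact: carrier_uF_metrisable_basis.
Qed.

End UnboundedTopology.

Theorem corollary5p10 (R : realType) (E : VL R) (F : set E)
    (NF : set (set E)) :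
  is_ideal F -> order_dense F -> o_Lebesgue_in F NF ->
  (* u_F tau_F is a uo-Lebesgue topology on E *)
  uo_Lebesgue_in setT (uF F NF) /\
  (* the parenthetical remark in (b) *)
  (metrisable_in F NF -> uo_Lebesgue_in F NF ->
     has_countable_order_basis_in F) /\
  ((countable_sup_property E \/
    (metrisable_in F NF /\ has_countable_order_basis_in F)) ->
   [/\ carrier (uF F NF) = setT,
       (* (1) *)
       (forall (A : Type) (leA : A -> A -> Prop) (x : A -> E) (l : E),
          directed leA -> tconv (uF F NF) leA x l ->
          exists al : nat -> A,
            [/\ embedded_seq leA al,
                uoconv_in setT nat_le (fun n => x (al n)) l &
                tconv (uF F NF) nat_le (fun n => x (al n)) l]) &
       (* (2) *)
       (forall (x : nat -> E) (l : E),
          tconv (uF F NF) nat_le x l <->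
          (forall p : nat -> nat, strict_incr p ->
             exists q : nat -> nat, strict_incr q /\
               uoconv_in setT nat_le (fun n => x (p (q n))) l))]).
Proof.
move=> hI hD hL; have huoL := uF_uo_Lebesgue hI hD hL.
split=> //; split=> [hm huo|hcase].
  exact: metrisable_uo_Lebesgue_countable_order_basis hI huo hm.
have hC := carrier_uF_setT hI hD hL hcase.
have hCx x : carrier (uF F NF) x by rewrite hC.
split=> //.
- by move=> A leA x l; apply: uo_Lebesgue_embedded_seq.
- exact: uo_Lebesgue_seqP.
Qed.
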